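(* Let $\mathcal{H}=(V,E)$ be a hypergraph with no repeated hyperedge, $V=\{v_1,\dots,v_n\}$, of range $k_{\max}\geq 2$, and let $\mathcal{A}_{\mathcal{H}}=(a_{i_1\dots i_{k_{\max}}})$ be its layered e-adjacency tensor (defined in the context). Let $d_i=\deg(v_i)$ for $i\in\{1,\dots,n\}$ and $d_{n+i}=\deg(y_i)$ for $i\in\{1,\dots,k_{\max}-1\}$ (degrees in the layered uniform hypergraph, defined in the context). Then for every $i\in\{1,\dots,n+k_{\max}-1\}$, $$\sum_{\substack{i_2,\dots,i_{k_{\max}}=1\\ \delta_{i i_2\dots i_{k_{\max}}}=0}}^{n+k_{\max}-1} a_{i i_2\dots i_{k_{\max}}} = d_i,$$ where $\delta_{i i_2\dots i_{k_{\max}}}$ equals $1$ if $i=i_2=\dots=i_{k_{\max}}$ and $0$ otherwise. Moreover, for every $j\in\{2,\dots,k_{\max}-1\}$, $|\{e\in E: |e|=j\}| = d_{n+j}-d_{n+j-1}$, and $|\{e\in E:|e|=1\}|=d_{n+1}$.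
   Context: A hypergraph $\mathcal{H}=(V,E)$ on the vertex set $V=\{v_1,\dots,v_n\}$ is a family $E$ of nonempty subsets (hyperedges) of $V$; it has no repeated hyperedge if its hyperedges are pairwise distinct. The range is $k_{\max}=\max\{|e|:e\in E\}$, and $\deg(v_i)$ is the number of hyperedges containing $v_i$. Introduce $k_{\max}-1$ new pairwise distinct vertices $y_1,\dots,y_{k_{\max}-1}\notin V$. The layered uniform hypergraph of $\mathcal{H}$ is the $k_{\max}$-uniform hypergraph on $V\cup\{y_1,\dots,y_{k_{\max}-1}\}$ whose hyperedges are $\hat e = e\cup\{y_{|e|},y_{|e|+1},\dots,y_{k_{\max}-1}\}$ for $e\in E$ (so nothing is added when $|e|=k_{\max}$); $\deg(y_i)$ is the number of such hyperedges containing $y_i$. The layered e-adjacency tensor $\mathcal{A}_{\mathcal{H}}$ is the symmetric hypermatrix of order $k_{\max}$ and dimension $n+k_{\max}-1$ (indices $1,\dots,n$ correspond to $v_1,\dots,v_n$, index $n+l$ corresponds to $y_l$) defined as follows: for each hyperedge $e=\{v_{i_1},\dots,v_{i_j}\}\in E$ with $i_1<\dots<i_j$, set $i_l=n+l-1$ for $l\in\{j+1,\dots,k_{\max}\}$; then for every permutation $\sigma$ of $\{1,\dots,k_{\max}\}$, the entry with index tuple $(i_{\sigma(1)},\dots,i_{\sigma(k_{\max})})$ equals $\frac{1}{(k_{\max}-1)!}$. All other entries are $0$. *)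

From mathcomp Require Import all_boot all_order all_algebra.
Set Implicit Arguments. Unset Strict Implicit. Unset Printing Implicit Defensive.
Import Order.TTheory GRing.Theory Num.Theory.

(* A hypergraph on V = {v_1,..,v_n} is encoded with vertices 'I_n
   (0-based: v_{i+1} <-> i) and hyperedge set E : {set {set 'I_n}}
   (a set, hence no repeated hyperedge). *)

Definition kmax (n : nat) (E : {set {set 'I_n}}) : nat := \max_(e in E) #|e|.

Definition ldim (n : nat) (E : {set {set 'I_n}}) : nat := n + kmax E - 1.

(* 0-based global indices: v_{i+1} <-> i (i < n), y_m <-> n + m - 1 (1 <= m).
   hat_idx E e = index sequence (i_1, ..., i_{k_max}) of the layered hyperedge
   \hat e = e \cup {y_{|e|}, ..., y_{k_max - 1}}: the vertices of e in increasing
   order followed by the indices of y_{|e|}, ..., y_{k_max-1}. *)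
Definition hat_idx (n : nat) (E : {set {set 'I_n}}) (e : {set 'I_n}) : seq nat :=
  [seq val v | v <- enum e] ++
  [seq n + l | l <- iota (#|e|.-1) (kmax E - #|e|)].

Definition ldeg (n : nat) (E : {set {set 'I_n}}) (x : nat) : nat :=
  #|[set e in E | x \in hat_idx E e]|.

Definition layered_tensor (R : numFieldType) (n : nat) (E : {set {set 'I_n}})
    (s : seq 'I_(ldim E)) : R :=
  if [exists e in E, perm_eq (map val s) (hat_idx E e)]
  then (((kmax E).-1)`!%:R)^-1%R else 0%R.

From mathcomp Require Import all_boot all_order all_algebra.
From mathcomp Require Import zify.
Import Order.TTheory GRing.Theory Num.Theory.

Set Implicit Arguments.
Unset Strict Implicit.
Unset Printing Implicit Defensive.

(* Every nonzero entry of the layered tensor equals 1/(k_max-1)! and sits at a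
   permutation of the index tuple of some \hat e, which determines e.  The
   tuples (i, i_2, ..., i_k) that permute the tuple of \hat e are as many as
   the orderings of \hat e minus i, i.e. (k_max-1)! when i lies in \hat e and
   none otherwise, so the i-th row sums to deg i; the diagonal entry vanishes
   because these tuples have distinct entries.  The vertex y_l lies in \hat e
   exactly when |e| <= l, so its degree counts the hyperedges of size at most
   l, and consecutive differences count those of size exactly l. *)

Lemma card_ffun_perm_eq_codom (T : finType) (m : nat) (r : seq T) :
  uniq r -> size r = m ->
  #|[set f : {ffun 'I_m -> T} | perm_eq (codom f) r]| = m`!.
Proof.
move=> r_uniq r_size.
have -> : m`! = #|r| ^_ #|'I_m|.
  by rewrite card_ord (card_uniqP r_uniq) r_size ffactnn.
rewrite -card_inj_ffuns_on; apply: eq_card => f.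
rewrite !inE; apply/idP/andP => [f_r | [/ffun_onP f_on f_inj]].
  split; last by rewrite /injectiveb /dinjectiveb (perm_uniq f_r).
  by apply/ffun_onP => x; rewrite -(perm_mem f_r) codom_f.
have codom_sub : {subset codom f <= r} by move=> _ /codomP[x ->].
apply: uniq_perm => //; apply: (uniq_min_size f_inj codom_sub _).2.
by rewrite size_codom card_ord r_size.
Qed.

Lemma card_le_succ (T : finType) (A : {set T}) (g : T -> nat) j :
  #|[set x in A | g x <= j.+1]|
    = #|[set x in A | g x == j.+1]| + #|[set x in A | g x <= j]|.
Proof.
rewrite -(cardsID [set x in A | g x <= j] [set x in A | g x <= j.+1]) addnC.
by congr (_ + _); apply: eq_card => x; rewrite !inE;
  case: (x \in A) => //=; apply/idP/idP; lia.
Qed.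

Section LayeredHypergraph.

Variables (n : nat) (E : {set {set 'I_n}}).
Hypothesis E_nonempty : forall e, e \in E -> e != set0.

Local Notation K := (kmax E).

Lemma card_edge_le_kmax e : e \in E -> #|e| <= K.
Proof. by move=> eE; apply: (@leq_bigmax_cond _ (mem E) (fun e => #|e|)). Qed.

Lemma mem_hat_idx_vertex e (v : 'I_n) : (val v \in hat_idx E e) = (v \in e).
Proof.
rewrite /hat_idx mem_cat (mem_map val_inj) mem_enum orbC.
by case: mapP => // -[l _ vE]; have := ltn_ord v; rewrite vE; lia.
Qed.

Lemma mem_hat_idx_layer e l : e \in E -> l < K.-1 ->
  (n + l \in hat_idx E e) = (#|e| <= l.+1).
Proof.
move=> eE lK; have e_pos : 0 < #|e| by rewrite card_gt0 E_nonempty.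
have := card_edge_le_kmax eE.
rewrite /hat_idx mem_cat (mem_map (@addnI n)) mem_iota.
case: mapP => [[v _ vE] | _] /=; first by have := ltn_ord v; rewrite -vE; lia.
by move=> eK; apply/idP/idP; lia.
Qed.

Lemma hat_idx_uniq e : uniq (hat_idx E e).
Proof.
rewrite /hat_idx cat_uniq (map_inj_uniq val_inj) enum_uniq.
rewrite (map_inj_uniq (@addnI n)) iota_uniq andbT /=.
apply/hasPn => _ /mapP[l _ ->]; apply/mapP => -[v _ vE].
by have := ltn_ord v; rewrite -vE; lia.
Qed.

Lemma size_hat_idx e : e \in E -> size (hat_idx E e) = K.
Proof.
move=> eE; rewrite /hat_idx size_cat !size_map size_iota -cardE.
exact/subnKC/card_edge_le_kmax.
Qed.

Lemma hat_idx_lt_ldim e x : e \in E -> x \in hat_idx E e -> x < ldim E.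
Proof.
move=> eE; have e_pos : 0 < #|e| by rewrite card_gt0 E_nonempty.
have := card_edge_le_kmax eE; rewrite /ldim /hat_idx mem_cat => eK.
case/orP => /mapP[y]; last by rewrite mem_iota => y_range ->; lia.
by move=> _ -> /=; have := ltn_ord y; lia.
Qed.

Lemma hat_idx_perm_inj e1 e2 :
  perm_eq (hat_idx E e1) (hat_idx E e2) -> e1 = e2.
Proof.
by move=> /perm_mem e12; apply/setP => v; rewrite -!mem_hat_idx_vertex e12.
Qed.

Lemma ldeg_layer l :
  l < K.-1 -> ldeg E (n + l) = #|[set e in E | #|e| <= l.+1]|.
Proof.
move=> lK; apply: eq_card => e; rewrite !inE.
by case eE: (e \in E) => //=; rewrite mem_hat_idx_layer.
Qed.

Lemma ldeg_layer_succ l : l.+1 < K.-1 ->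
  ldeg E (n + l.+1) = #|[set e in E | #|e| == l.+2]| + ldeg E (n + l).
Proof. by move=> lK; rewrite !ldeg_layer ?card_le_succ // ltnW. Qed.

Lemma ldeg_first_layer : 1 < K -> ldeg E n = #|[set e in E | #|e| == 1]|.
Proof.
move=> K_gt1; rewrite -[X in ldeg E X]addn0 ldeg_layer -?subn1 ?subn_gt0 //.
apply: eq_card => e; rewrite !inE; case eE: (e \in E) => //=.
by have := E_nonempty eE; rewrite -card_gt0; case: #|e| => [|[|]].
Qed.

Lemma card_ffun_complete_hat_idx e x : e \in E ->
  #|[set f : {ffun 'I_K.-1 -> 'I_(ldim E)}
      | perm_eq (x :: map val (codom f)) (hat_idx E e)]|
    = (x \in hat_idx E e) * K.-1`!.
Proof.
move=> eE; have [xe | xNe] := boolP (x \in hat_idx E e); last first.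
  rewrite mul0n; apply: eq_card0 => f; rewrite inE; apply/negP => /perm_mem fe.
  by move: xNe; rewrite -fe mem_head.
set rest : seq 'I_(ldim E) := pmap insub (rem x (hat_idx E e)).
have restE : map val rest = rem x (hat_idx E e).
  rewrite (pmap_filter (@insubK _ _ _)); apply/all_filterP/allP => y /mem_rem.
  by rewrite isSome_insub; apply: hat_idx_lt_ldim.
rewrite mul1n -(@card_ffun_perm_eq_codom _ _ rest).
- apply: eq_card => f; rewrite !inE (permPr (perm_to_rem xe)) perm_cons -restE.
  by apply/idP/idP; [exact: (perm_map_inj val_inj) | exact: perm_map].
- by rewrite -(map_inj_uniq val_inj) restE rem_uniq ?hat_idx_uniq.
- by rewrite -(size_map val) restE size_rem // size_hat_idx.
Qed.

Local Open Scope ring_scope.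

Variable R : numFieldType.
Local Notation tensor := (@layered_tensor R n E).

Lemma layered_tensor_non_uniq s : ~~ uniq (map val s) -> tensor s = 0.
Proof.
move=> s_dup; rewrite /layered_tensor.
case: existsP => // -[e /andP[_ /perm_uniq]].
by rewrite hat_idx_uniq (negbTE s_dup).
Qed.

Lemma layered_tensorE s : tensor s =
  \sum_(e in E | perm_eq (map val s) (hat_idx E e)) ((K.-1)`!%:R)^-1.
Proof.
rewrite /layered_tensor; case: existsP => [[e0 /andP[e0E se0]] | noE].
  rewrite (big_pred1 e0) // => e /=; apply/andP/eqP => [[eE se] | ->] //.
  by apply: hat_idx_perm_inj; rewrite -(permPl se).
by rewrite big_pred0 // => e; apply/andP => -[eE se]; apply: noE; exists e;
  rewrite eE.
Qed.

Lemma layered_tensor_row_sum (i : 'I_(ldim E)) :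
  \sum_(f : {ffun 'I_K.-1 -> 'I_(ldim E)}) tensor (i :: codom f)
    = (ldeg E i)%:R.
Proof.
under eq_bigr do rewrite layered_tensorE big_mkcondr.
rewrite exchange_big /= /ldeg -sum1dep_card natr_sum big_mkcondr /=.
apply: eq_bigr => e eE; rewrite -big_mkcond -big_set sumr_const.
rewrite card_ffun_complete_hat_idx //; case: (_ \in _); rewrite ?mulr0n //.
rewrite [(_ * _`!)%N]mul1n -[_^-1 *+ _]mulr_natr.
by rewrite mulVf ?pnatr_eq0 -?lt0n ?fact_gt0.
Qed.

Lemma layered_tensor_diag i (f : {ffun 'I_K.-1 -> 'I_(ldim E)}) :
  (1 < K)%N -> [forall j, f j == i] -> tensor (i :: codom f) = 0.
Proof.
move=> K_gt1 /forallP f_i; apply: layered_tensor_non_uniq.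
have j0 : 'I_K.-1 by exists 0; rewrite -subn1 subn_gt0.
by rewrite /= negb_and negbK (mem_map val_inj) -(eqP (f_i j0)) codom_f.
Qed.

End LayeredHypergraph.

Theorem mainTheorem1 (R : numFieldType) (n : nat) (E : {set {set 'I_n}})
    (hne : forall e, e \in E -> e != set0)
    (hk : 2 <= kmax E) :
  (forall i : 'I_(ldim E),
     (\sum_(f : {ffun 'I_((kmax E).-1) -> 'I_(ldim E)} | ~~ [forall j, f j == i])
        @layered_tensor R n E (i :: codom f))%R = ((ldeg E i)%:R)%R) /\
  (forall j : nat, 2 <= j <= (kmax E).-1 ->
     ((#|[set e in E | #|e| == j]|)%:Z)%R
       = ((ldeg E (n + j - 1))%:Z - (ldeg E (n + j - 2))%:Z)%R) /\
  #|[set e in E | #|e| == 1]| = ldeg E n.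
Proof.
split; last split.
- move=> i; rewrite big_rmcond => [|f]; first exact: layered_tensor_row_sum.
  by rewrite negbK; apply: layered_tensor_diag.
- case=> [|[|l]] // /andP[_ lK].
  have -> : n + l.+2 - 1 = n + l.+1 by lia.
  have -> : n + l.+2 - 2 = n + l by lia.
  by rewrite (ldeg_layer_succ hne) // PoszD addrK.
- by rewrite ldeg_first_layer.
Qed.
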